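(* Let $G$ be a finite strongly regular graph that is not isomorphic to $C_3$, $C_4$, $C_5$, nor to a disjoint union of copies of $C_3$. Then there is $m\in\{0,1,2\}$ such that $\mathrm{L}^{(m)}(G)$ is not strongly regular; i.e. applying at most two line graph transformations to $G$ yields a graph that is not strongly regular.
   Context: A finite simple graph on $v\ge1$ vertices is strongly regular with parameters $(v,k,\lambda,\mu)$, where $k,\lambda,\mu$ are nonnegative integers, if every vertex has degree $k$, every pair of adjacent vertices has exactly $\lambda$ common neighbours, and every pair of distinct non-adjacent vertices has exactly $\mu$ common neighbours; by convention the graph with no vertices is not strongly regular. $G$ need not be connected. $\mathrm{L}(G)$ has vertex set $E(G)$, two vertices adjacent iff the corresponding edges share an endpoint; $\mathrm{L}^{(0)}(G)=G$ and $\mathrm{L}^{(m)}=\mathrm{L}\circ\mathrm{L}^{(m-1)}$. $C_n$ is the cycle on $n$ vertices. *)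

From mathcomp Require Import all_boot.
Set Implicit Arguments. Unset Strict Implicit. Unset Printing Implicit Defensive.

Record sgraph := SGraph {
  vert : finType;
  adj : rel vert;
  adj_sym : symmetric adj;
  adj_irr : irreflexive adj }.

Definition srg_with (G : sgraph) (k lam mu : nat) : Prop :=
  [/\ 0 < #|vert G|,
      forall x : vert G, #|[set y | adj x y]| = k,
      forall x y : vert G, adj x y -> #|[set z | adj x z && adj y z]| = lam
    & forall x y : vert G, x != y -> ~~ adj x y ->
        #|[set z | adj x z && adj y z]| = mu].

Definition strongly_regular (G : sgraph) : Prop :=
  exists k lam mu, srg_with G k lam mu.

Definition isomorphic (G H : sgraph) : Prop :=
  exists f : vert G -> vert H, bijective f /\
    forall x y, adj (f x) (f y) = adj x y.

Definition is_edge (G : sgraph) (e : {set vert G}) : bool :=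
  [exists x, exists y, adj x y && (e == [set x; y])].

Definition edge_type (G : sgraph) := {e : {set vert G} | is_edge e}.

Definition line_adj (G : sgraph) : rel (edge_type G) :=
  fun e f => (e != f) && ~~ [disjoint val e & val f].

Lemma line_adj_sym (G : sgraph) : symmetric (@line_adj G).
Proof.
by move=> e f; rewrite /line_adj eq_sym disjoint_sym.
Qed.

Lemma line_adj_irr (G : sgraph) : irreflexive (@line_adj G).
Proof. by move=> e; rewrite /line_adj eqxx. Qed.

Definition line_graph (G : sgraph) : sgraph :=
  @SGraph (edge_type G) (@line_adj G) (@line_adj_sym G) (@line_adj_irr G).

Fixpoint iter_line (m : nat) (G : sgraph) : sgraph :=
  match m with 0 => G | m'.+1 => line_graph (iter_line m' G) end.

Definition cyc_adj (n : nat) : rel 'I_n.+3 :=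
  fun i j => (val j == (val i).+1 %% n.+3) || (val i == (val j).+1 %% n.+3).

Lemma cyc_adj_sym n : symmetric (@cyc_adj n).
Proof. by move=> i j; rewrite /cyc_adj orbC. Qed.

Lemma cyc_adj_irr n : irreflexive (@cyc_adj n).
Proof.
move=> i; rewrite /cyc_adj orbb; case: i => i /= Hi.
case: (ltngtP i.+1 n.+3) => H.
- by rewrite modn_small // eq_sym (gtn_eqF (ltnSn i)).
- by move: H; rewrite ltnS leqNgt Hi.
- by rewrite H modnn; case: i Hi H.
Qed.

Definition cycle_graph (n : nat) : sgraph :=
  @SGraph _ (@cyc_adj n) (@cyc_adj_sym n) (@cyc_adj_irr n).
(* C_3 = cycle_graph 0, C_4 = cycle_graph 1, C_5 = cycle_graph 2. *)

Definition tri_adj (m : nat) : rel ('I_m * 'I_3) :=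
  fun u v => (u.1 == v.1) && (u.2 != v.2).

Lemma tri_adj_sym m : symmetric (@tri_adj m).
Proof. by move=> u v; rewrite /tri_adj eq_sym [u.2 == _]eq_sym. Qed.

Lemma tri_adj_irr m : irreflexive (@tri_adj m).
Proof. by move=> u; rewrite /tri_adj !eqxx. Qed.

Definition triangles (m : nat) : sgraph :=
  @SGraph _ (@tri_adj m) (@tri_adj_sym m) (@tri_adj_irr m).

Definition disjoint_union_of_C3 (G : sgraph) : Prop :=
  exists m, isomorphic G (triangles m).

(* If G is strongly regular of degree k, there are three cases.  For k <= 1 the
   line graph L(G) has no edges, so L(L(G)) has no vertices.  For k = 2 the graph
   is a disjoint union of cycles, and constant lambda and mu leave only C_4, C_5 and
   unions of triangles.  For k >= 3, L(G) is (2k-2)-regular and contains both a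
   triangle (three edges at a vertex) and an induced path on three vertices.  In
   the line graph of a d-regular graph, the adjacent vertices fe and fg have
   d - 2 + [eg is an edge] common neighbours, so lambda of L(L(G)) takes two
   different values. *)

From mathcomp Require Import all_boot zify.
Set Implicit Arguments. Unset Strict Implicit. Unset Printing Implicit Defensive.

Definition regular (G : sgraph) (k : nat) : Prop :=
  forall x : vert G, #|[set y | adj x y]| = k.

Definition edgeless (G : sgraph) : Prop := forall x y : vert G, ~~ adj x y.

Definition has_triangle (G : sgraph) : Prop :=
  exists x y z : vert G, [/\ adj x y, adj y z & adj x z].

Definition has_induced_path3 (G : sgraph) : Prop :=
  exists x y z : vert G, [/\ adj x y, adj y z, x != z & ~~ adj x z].

Lemma disjoint_set2 (T : finType) (a b : T) (B : {set T}) :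
  [disjoint [set a; b] & B] = (a \notin B) && (b \notin B).
Proof.
rewrite (@eq_disjoint _ _ (predU1 a (pred1 b))) ?disjointU1 ?disjoint1 //.
by move=> x; rewrite !inE.
Qed.

Lemma card_lt_notin (T : finType) (A B : {set T}) :
  #|B| < #|A| -> exists2 x, x \in A & x \notin B.
Proof.
move=> lt_BA; apply/subsetPn; apply: contraTN lt_BA => /subset_leq_card.
by rewrite leqNgt.
Qed.

Section Edges.
Variable G : sgraph.
Implicit Types (a b v w : vert G) (Z W : edge_type G).

Lemma adj_neq a b : adj a b -> a != b.
Proof. by apply: contraTneq => ->; rewrite adj_irr. Qed.

Lemma is_edge_set2 a b : adj a b -> is_edge [set a; b].
Proof. by move=> ab; apply/existsP; exists a; apply/existsP; exists b; rewrite ab eqxx. Qed.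

Definition edge_of a b (ab : adj a b) : edge_type G :=
  exist (fun S => is_edge S) _ (is_edge_set2 ab).

Lemma edgeP Z : exists a b, adj a b /\ val Z = [set a; b].
Proof. by case: Z => /= Z /existsP [a /existsP [b /andP [ab /eqP ->]]]; exists a, b. Qed.

Lemma edge_other Z v : v \in val Z -> exists2 w, adj v w & val Z = [set v; w].
Proof.
have [a [b [ab ->]]] := edgeP Z; rewrite !inE => /orP [] /eqP ->; first by exists b.
by exists a; rewrite 1?adj_sym // setUC.
Qed.

Lemma edge_set2 Z a b : a != b -> a \in val Z -> b \in val Z -> val Z = [set a; b].
Proof.
move=> a_neq_b aZ bZ; apply/eqP; rewrite eq_sym eqEcard subUset !sub1set aZ bZ.
by have [x [y [xy ->]]] := edgeP Z; rewrite !cards2 a_neq_b adj_neq.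
Qed.

Lemma is_edge_set2_adj a b : a != b -> is_edge [set a; b] -> adj a b.
Proof.
move=> a_neq_b /existsP [x /existsP [y /andP [xy /eqP abE]]].
have: a \in [set x; y] by rewrite -abE set21.
have: b \in [set x; y] by rewrite -abE set22.
rewrite !inE => /orP [] /eqP bE /orP [] /eqP aE; move: a_neq_b; rewrite aE bE ?eqxx //.
by rewrite adj_sym.
Qed.

Lemma card_edges_at v : #|[set Z : edge_type G | v \in val Z]| = #|[set w | adj v w]|.
Proof.
rewrite -(card_imset [set Z : edge_type G | v \in val Z] val_inj).
rewrite -(@card_in_imset _ _ (fun w => [set v; w]) [set w | adj v w]).
  apply: eq_card => S; apply/imsetP/imsetP => [[Z]|[w]]; rewrite !inE.
    by move=> /edge_other [w vw ->] ->; exists w; rewrite ?inE.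
  move=> vw ->; exists (edge_of vw) => //; by rewrite inE set21.
move=> w1 w2; rewrite !inE => vw1 _ E; have := set22 v w1; rewrite E !inE.
by case/orP => /eqP // w1v; move: vw1; rewrite w1v adj_irr.
Qed.

Lemma card_edges_at2 a b : a != b ->
  #|[set Z : edge_type G | (a \in val Z) && (b \in val Z)]| = adj a b.
Proof.
move=> a_neq_b; case: (boolP (adj a b)) => [ab | a_nadj_b].
  rewrite /= -(cards1 (edge_of ab)); apply: eq_card => Z; rewrite !inE.
  apply/andP/eqP => [[aZ bZ] | -> /=]; last by rewrite set21 set22.
  by apply: val_inj; rewrite /= (edge_set2 a_neq_b).
apply/eqP; rewrite cards_eq0; apply/eqP/setP => Z; rewrite !inE.
apply: contraNF a_nadj_b => /andP [aZ bZ]; apply: is_edge_set2_adj => //.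
by rewrite -(edge_set2 a_neq_b aZ bZ) (valP Z).
Qed.

Lemma line_adj_shared Z W v w :
  v \in val Z -> v \in val W -> w \in val Z -> w \notin val W -> line_adj Z W.
Proof.
move=> vZ vW wZ wW; rewrite /line_adj; apply/andP; split.
  by apply: contraNneq wW => <-.
by apply/negP => /disjointFr /(_ vZ); rewrite vW.
Qed.

Lemma line_adj_set2 Z a b : val Z = [set a; b] ->
  line_adj Z =1 fun W => (W != Z) && ((a \in val W) || (b \in val W)).
Proof. by move=> ZE W; rewrite /line_adj ZE disjoint_set2 negb_and !negbK eq_sym. Qed.

Lemma line_deg a b (ab : adj a b) :
  #|[set W | line_adj (edge_of ab) W]| = #|[set w | adj a w]| + #|[set w | adj b w]| - 2.
Proof.
set Z := edge_of ab.
pose At v := [set W : edge_type G | v \in val W].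
have ZE : [set W | line_adj Z W] = (At a :|: At b) :\ Z.
  by apply/setP => W; rewrite !inE (line_adj_set2 (erefl (val Z))).
have Z_ab : Z \in At a :|: At b by rewrite !inE eqxx.
have := cardsD1 Z (At a :|: At b); rewrite Z_ab -ZE cardsU.
have -> : At a :&: At b = [set W : edge_type G | (a \in val W) && (b \in val W)].
  by apply/setP => W; rewrite !inE.
by rewrite card_edges_at2 ?adj_neq // ab !card_edges_at /=; lia.
Qed.

Lemma line_common_neighbours e f g (fe : adj f e) (fg : adj f g) : e != g ->
  #|[set W | line_adj (edge_of fe) W && line_adj (edge_of fg) W]|
    = #|[set w | adj f w]| - 2 + adj e g.
Proof.
move=> e_neq_g; set X := edge_of fe; set Y := edge_of fg.
pose At := [set W : edge_type G | f \in val W].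
pose Ateg := [set W : edge_type G | (e \in val W) && (g \in val W)].
have [f_neq_e f_neq_g] := (adj_neq fe, adj_neq fg).
have not_f_eg W : f \in val W -> (e \in val W) && (g \in val W) = false.
  move=> fW; apply/negbTE/andP => [[eW gW]]; move: fW.
  by rewrite (edge_set2 e_neq_g eW gW) !inE (negbTE f_neq_e) (negbTE f_neq_g).
have XYE : [set W | line_adj X W && line_adj Y W] = (At :\ X :\ Y) :|: Ateg.
  apply/setP => W; rewrite !inE (line_adj_set2 (erefl (val X))).
  rewrite (line_adj_set2 (erefl (val Y))).
  case fW: (f \in val W) => /=; first by rewrite not_f_eg // !andbT orbF andbC.
  have W_neq_X : W != X by apply: (contraFneq _ fW) => ->; rewrite /X /= set21.
  have W_neq_Y : W != Y by apply: (contraFneq _ fW) => ->; rewrite /Y /= set21.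
  by rewrite W_neq_X W_neq_Y.
have disj : (At :\ X :\ Y) :&: Ateg = set0.
  apply/setP => W; rewrite !inE.
  by case: (boolP (f \in val W)) => [/not_f_eg -> | _]; rewrite ?andbF.
have X_At : X \in At by rewrite !inE eqxx.
have e_notin_Y : e \notin val Y by rewrite !inE negb_or eq_sym f_neq_e.
have Y_AtX : Y \in At :\ X.
  by rewrite !inE eqxx andbT; apply: contraNneq e_notin_Y => ->; rewrite !inE eqxx orbT.
rewrite XYE cardsU disj cards0 subn0 card_edges_at2 //.
have := cardsD1 X At; have := cardsD1 Y (At :\ X).
by rewrite X_At Y_AtX card_edges_at; lia.
Qed.

Lemma line_adj_edge_of a b c (ba : adj b a) (bc : adj b c) :
  a != c -> line_adj (edge_of ba) (edge_of bc).
Proof.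
move=> a_neq_c; apply: (@line_adj_shared _ _ b a); rewrite /= ?set21 ?set22 //.
by rewrite !inE negb_or a_neq_c eq_sym adj_neq.
Qed.

End Edges.

Lemma line_graph_regular G k : regular G k -> regular (line_graph G) (k + k - 2).
Proof.
move=> Gk Z; have [a [b [ab ZE]]] := edgeP Z.
have -> : Z = edge_of ab by apply: val_inj.
by rewrite line_deg !Gk.
Qed.

Lemma regular_line_not_srg G d : regular G d -> has_triangle G -> has_induced_path3 G ->
  ~ strongly_regular (line_graph G).
Proof.
move=> Gd [x [y [z [xy yz xz]]]] [x' [y' [z' [xy' yz' x'_neq_z' x'_nadj_z']]]].
move=> [k [l [m [_ _ lambdaE _]]]].
have yx : adj y x by rewrite adj_sym.
have yx' : adj y' x' by rewrite adj_sym.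
have := lambdaE _ _ (line_adj_edge_of yx yz (adj_neq xz)).
have := lambdaE _ _ (line_adj_edge_of yx' yz' x'_neq_z').
rewrite /= !line_common_neighbours ?(adj_neq xz) // !Gd xz (negbTE x'_nadj_z').
lia.
Qed.

Lemma line_graph_of_edgeless_not_srg G : edgeless G -> ~ strongly_regular (line_graph G).
Proof.
move=> G0 [k [l [m [/card_gt0P [Z _] _ _ _]]]].
by have [a [b [ab _]]] := edgeP Z; move: (G0 a b); rewrite ab.
Qed.

Lemma line_graph_edgeless G :
  (forall x : vert G, #|[set y | adj x y]| <= 1) -> edgeless (line_graph G).
Proof.
move=> G_le1 Z W; apply/negP => /andP [Z_neq_W /pred0Pn [v /andP [vZ vW]]].
have [z vz ZE] := edge_other vZ; have [w vw WE] := edge_other vW.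
have z_eq_w : z = w by move/card_le1_eqP: (G_le1 v) => /(_ w z); rewrite !inE; apply.
by move: Z_neq_W; rewrite -val_eqE ZE WE z_eq_w eqxx.
Qed.

Lemma line_graph_triangle G (x : vert G) :
  2 < #|[set y | adj x y]| -> has_triangle (line_graph G).
Proof.
case/card_gt2P => [a [b [c [[xa xb xc] [a_neq_b b_neq_c c_neq_a]]]]].
rewrite !inE in xa xb xc.
exists (edge_of xa), (edge_of xb), (edge_of xc).
by split; apply: line_adj_edge_of; rewrite // eq_sym.
Qed.

Lemma line_graph_induced_path3 G (x a : vert G) : adj x a ->
  1 < #|[set y | adj x y]| -> 2 < #|[set y | adj a y]| ->
  has_induced_path3 (line_graph G).
Proof.
move=> xa x_deg a_deg.
have [b xb b_neq_a] : exists2 b, b \in [set y | adj x y] & b \notin [set a].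
  by apply: card_lt_notin; rewrite cards1.
have [w aw w_notin_xb] : exists2 w, w \in [set y | adj a y] & w \notin [set x; b].
  by apply: card_lt_notin; rewrite cards2; apply: leq_ltn_trans a_deg; rewrite ltnS leq_b1.
rewrite !inE in xb b_neq_a aw w_notin_xb; rewrite negb_or in w_notin_xb.
case/andP: w_notin_xb => w_neq_x w_neq_b.
have [x_neq_a a_neq_w] := (adj_neq xa, adj_neq aw).
exists (edge_of xb), (edge_of xa), (edge_of aw); split.
- exact: line_adj_edge_of.
- apply: (@line_adj_shared _ _ _ a x); rewrite /= ?set21 ?set22 //.
  by rewrite !inE negb_or x_neq_a eq_sym w_neq_x.
- rewrite -val_eqE /=; apply: contra_neq w_neq_b => /setP/(_ b).
  by rewrite !inE eqxx orbT (negbTE b_neq_a) eq_sym => /esym/eqP.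
- by rewrite /= /line_adj disjoint_set2 !inE (eq_sym x w) (eq_sym b w)
    (negbTE x_neq_a) (negbTE b_neq_a) (negbTE w_neq_x) (negbTE w_neq_b) andbF.
Qed.

Lemma cyc_adjE n (i j : 'I_n.+3) : cyc_adj i j = (j == ordS i) || (i == ordS j).
Proof. by []. Qed.

Lemma ordS2_neq n (i : 'I_n.+3) : ordS (ordS i) != i.
Proof.
(* Otherwise i + 2 = i + 0 modulo n + 3 > 2. *)
apply/eqP => /(congr1 val) /=; rewrite -[(_ %% _).+1]addn1 modnDml => /eqP.
rewrite -{2}(modn_small (ltn_ord i)) addn1 -[i.+2]addn2 -{2}[nat_of_ord i]addn0.
by rewrite eqn_modDl !modn_small.
Qed.

Lemma cycle_graph_regular n : regular (cycle_graph n) 2.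
Proof.
move=> i /=; have -> : [set j | cyc_adj i j] = [set ordS i; ord_pred i].
  apply/setP => j; rewrite !inE cyc_adjE; congr (_ || _).
  by apply/eqP/eqP => [-> | ->]; rewrite ?ordSK ?ord_predK.
rewrite cards2; suff -> : ordS i != ord_pred i by [].
by apply: contra_neq (ordS2_neq i) => ->; rewrite ord_predK.
Qed.

Lemma iso_of_regular_bij (G H : sgraph) k (g : vert H -> vert G) :
  regular G k -> regular H k -> bijective g ->
  (forall x y, adj x y -> adj (g x) (g y)) -> isomorphic G H.
Proof.
move=> Gk Hk [f gK fK] g_adj; have g_inj := can_inj gK.
have adj_g x y : adj (g x) (g y) = adj x y.
  apply/idP/idP => [gxy | ]; last exact: g_adj.
  have g_nbhd : g @: [set y | adj x y] = [set z | adj (g x) z].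
    apply/eqP; rewrite eqEcard card_imset // Gk Hk leqnn andbT.
    by apply/subsetP => _ /imsetP [y' xy' ->]; rewrite !inE in xy' *; apply: g_adj.
  have : g y \in [set z | adj (g x) z] by rewrite inE.
  by rewrite -g_nbhd mem_imset // inE.
exists f; split; first by exists g.
by move=> x y; rewrite -adj_g !fK.
Qed.

Section TwoRegular.
Variable G : sgraph.
Hypothesis G2 : regular G 2.
Implicit Types a b x y z : vert G.

Lemma regular2_neighbours x a b : adj x a -> adj x b -> a != b ->
  forall z, adj x z = (z == a) || (z == b).
Proof.
move=> xa xb a_neq_b; have Nx : [set y | adj x y] = [set a; b].
  by apply/esym/eqP; rewrite eqEcard subUset !sub1set !inE xa xb G2 cards2 a_neq_b.
by move=> z; rewrite -in_set2 -Nx inE.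
Qed.

Lemma regular2_exists_other x a : exists2 b, adj x b & a != b.
Proof.
have [b] : exists2 b, b \in [set y | adj x y] & b \notin [set a].
  by apply: card_lt_notin; rewrite G2 cards1.
by rewrite !inE eq_sym; exists b.
Qed.

Lemma cycle_iso_of_listing n (s : seq (vert G)) (z0 : vert G) :
  size s = n.+3 -> uniq s -> (forall z, z \in s) ->
  (forall i : 'I_n.+3, adj (nth z0 s i) (nth z0 s (ordS i))) ->
  isomorphic G (cycle_graph n).
Proof.
move=> s_size s_uniq s_all s_adj.
have index_lt z : index z s < n.+3 by rewrite -s_size index_mem.
apply: (@iso_of_regular_bij G (cycle_graph n) 2 (fun i : 'I_n.+3 => nth z0 s i) G2);
  first exact: cycle_graph_regular.
  exists (fun z => Ordinal (index_lt z)) => [i | z]; last by rewrite nth_index.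
  by apply: val_inj; rewrite /= index_uniq ?s_size.
move=> i j; rewrite /= cyc_adjE => /orP [] /eqP ->; last rewrite adj_sym; exact: s_adj.
Qed.

Lemma regular2_adj_trans :
  (forall x y, adj x y -> 0 < #|[set z | adj x z && adj y z]|) ->
  forall x y z, adj x y -> adj y z -> x != z -> adj x z.
Proof.
move=> lambda_gt0 x y z xy yz x_neq_z; have yx : adj y x by rewrite adj_sym.
have [w] := card_gt0P (lambda_gt0 _ _ yx); rewrite inE => /andP [yw xw].
move: yw; rewrite (regular2_neighbours yx yz x_neq_z) => /orP [] /eqP w_eq.
  by rewrite w_eq adj_irr in xw.
by rewrite -w_eq.
Qed.

Section Triangles.
Hypothesis adj_trans : forall x y z : vert G, adj x y -> adj y z -> x != z -> adj x z.

Definition cnbhd x : {set vert G} := x |: [set y | adj x y].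
Definition cnbhds := [set cnbhd x | x : vert G].

Lemma in_cnbhd x y : (y \in cnbhd x) = (y == x) || adj x y.
Proof. by rewrite !inE. Qed.

Lemma cnbhd_eq x y : y \in cnbhd x -> cnbhd y = cnbhd x.
Proof.
rewrite in_cnbhd => /orP [/eqP -> // | xy]; have yx : adj y x by rewrite adj_sym.
apply/setP => z; rewrite !in_cnbhd.
have [-> | z_neq_x] := eqVneq z x; first by rewrite yx orbT.
have [-> | z_neq_y] := eqVneq z y; first by rewrite xy orbT.
rewrite /=; apply/idP/idP => [yz | xz]; first by apply: (adj_trans xy yz); rewrite eq_sym.
by apply: (adj_trans yx xz); rewrite eq_sym.
Qed.

Lemma cnbhd_in x : cnbhd x \in cnbhds.
Proof. exact: imset_f. Qed.

Lemma card_cnbhd x : #|cnbhd x| = 3.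
Proof. by rewrite cardsU1 G2 inE adj_irr. Qed.

Lemma regular2_triangles (x0 : vert G) : disjoint_union_of_C3 G.
Proof.
pose rank x := enum_rank_in (cnbhd_in x0) (cnbhd x).
have index_lt x : index x (enum (cnbhd x)) < 3.
  by rewrite -(card_cnbhd x) cardE index_mem mem_enum !inE eqxx.
pose f x : 'I_#|cnbhds| * 'I_3 := (rank x, Ordinal (index_lt x)).
pose g (p : 'I_#|cnbhds| * 'I_3) := nth x0 (enum (enum_val p.1)) p.2.
have rankK x : enum_val (rank x) = cnbhd x by rewrite enum_rankK_in ?cnbhd_in.
have same_rank x y : (rank x == rank y) = (y \in cnbhd x).
  apply/eqP/idP => [/(congr1 enum_val) | /cnbhd_eq Cyx]; last by rewrite /rank Cyx.
  by rewrite !rankK => ->; rewrite !inE eqxx.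
exists #|cnbhds|, f; split.
  exists g => [x | [i j]]; first by rewrite /g /= rankK nth_index ?mem_enum ?inE ?eqxx.
  have [z _ Ci] := imsetP (enum_valP i).
  have y_in : g (i, j) \in enum_val i.
    by rewrite -mem_enum mem_nth // -cardE Ci card_cnbhd.
  have Cy : cnbhd (g (i, j)) = enum_val i by rewrite Ci; apply: cnbhd_eq; rewrite -Ci.
  congr (_, _); first by rewrite /rank Cy enum_valK_in.
  by apply: val_inj; rewrite /= Cy index_uniq ?enum_uniq // -cardE Ci card_cnbhd.
move=> x y; rewrite /= /tri_adj /= same_rank in_cnbhd.
have [-> | y_neq_x] := eqVneq y x; first by rewrite adj_irr /= eqxx.
case: (boolP (adj x y)) => //= xy.
have Cyx : cnbhd y = cnbhd x by apply: cnbhd_eq; rewrite in_cnbhd xy orbT.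
have x_in : x \in enum (cnbhd x) by rewrite mem_enum setU11.
have y_in : y \in enum (cnbhd x) by rewrite -Cyx mem_enum setU11.
apply/eqP => /(congr1 val) /=; rewrite Cyx => /(index_inj x0 x_in y_in) x_eq_y.
by rewrite x_eq_y eqxx in y_neq_x.
Qed.

End Triangles.

Lemma regular2_mu_gt0_cycle x a b :
  (forall y z, y != z -> ~~ adj y z -> 0 < #|[set w | adj y w && adj z w]|) ->
  adj x a -> adj x b -> a != b -> ~~ adj a b ->
  isomorphic G (cycle_graph 1) \/ isomorphic G (cycle_graph 2).
Proof.
move=> mu_gt0 xa xb a_neq_b a_nadj_b.
have common y z : y != z -> ~~ adj y z -> exists w, adj y w && adj z w.
  by move=> y_neq_z /(mu_gt0 _ _ y_neq_z) /card_gt0P [w]; rewrite inE; exists w.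
have [ax bx] : adj a x /\ adj b x by rewrite !(adj_sym _ x).
have [a' aa' x_neq_a'] := regular2_exists_other a x.
have [b' bb' x_neq_b'] := regular2_exists_other b x.
have Nx := regular2_neighbours xa xb a_neq_b.
have Na := regular2_neighbours ax aa' x_neq_a'.
have Nb := regular2_neighbours bx bb' x_neq_b'.
have [x_neq_a x_neq_b] := (adj_neq xa, adj_neq xb).
have [a_neq_a' b_neq_b'] := (adj_neq aa', adj_neq bb').
have a'_neq_b : a' != b by apply: contraNneq a_nadj_b => <-.
have a_neq_b' : a != b' by apply: contraNneq a_nadj_b => ->; rewrite adj_sym.
have cover z : z \in [:: x; a; a'; b'; b].
  apply/negPn/negP; rewrite !inE !negb_or => /and5P [z_neq_x z_neq_a z_neq_a' z_neq_b' z_neq_b].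
  have [w /andP [zw xw]] : exists w, adj z w && adj x w.
    by apply: (common _ _ z_neq_x); rewrite adj_sym Nx negb_or z_neq_a.
  move: zw; rewrite adj_sym; move: xw; rewrite Nx => /orP [] /eqP ->.
    by rewrite Na (negbTE z_neq_x) (negbTE z_neq_a').
  by rewrite Nb (negbTE z_neq_x) (negbTE z_neq_b').
have [a'_eq_b' | a'_neq_b'] := eqVneq a' b'.
  left; apply: (@cycle_iso_of_listing 1 [:: x; a; a'; b] x) => //.
  - by rewrite /= !inE !negb_or x_neq_a x_neq_a' x_neq_b a_neq_a' a_neq_b a'_neq_b.
  - move=> z; have := cover z; rewrite -a'_eq_b' !inE.
    by case/orP => [->|/orP [->|/orP [->|/orP [->|->]]]]; rewrite ?orbT.
  - by case=> [[|[|[|[|]]]] ?] //=; rewrite // adj_sym a'_eq_b'.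
have a'b' : adj a' b'.
  have [w /andP [a'w bw]] : exists w, adj a' w && adj b w.
    by apply: (common _ _ a'_neq_b); rewrite adj_sym Nb negb_or eq_sym x_neq_a'.
  move: bw; rewrite Nb => /orP [] /eqP w_eq; last by rewrite -w_eq.
  by move: a'w; rewrite w_eq adj_sym Nx eq_sym (negbTE a_neq_a') (negbTE a'_neq_b).
right; apply: (@cycle_iso_of_listing 2 [:: x; a; a'; b'; b] x) => //.
- rewrite /= !inE !negb_or x_neq_a x_neq_a' x_neq_b' x_neq_b a_neq_a' a_neq_b' a_neq_b.
  by rewrite a'_neq_b' a'_neq_b eq_sym b_neq_b'.
- by case=> [[|[|[|[|[|]]]]] ?] //=; rewrite // adj_sym.
Qed.

End TwoRegular.

Lemma srg_regular2_classification G l m : srg_with G 2 l m ->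
  [\/ isomorphic G (cycle_graph 1), isomorphic G (cycle_graph 2)
    | disjoint_union_of_C3 G].
Proof.
case=> /card_gt0P [x _] G2 lambdaE muE.
have [a xa _] := regular2_exists_other G2 x x.
have [b xb a_neq_b] := regular2_exists_other G2 x a.
have [ab | a_nadj_b] := boolP (adj a b).
  apply: Or33; apply: (regular2_triangles G2 _ x); apply: regular2_adj_trans => // y z yz.
  by rewrite lambdaE // -(lambdaE _ _ xa); apply/card_gt0P; exists b; rewrite inE xb.
have mu_gt0 (y z : vert G) : y != z -> ~~ adj y z -> 0 < #|[set w | adj y w && adj z w]|.
  move=> y_neq_z y_nadj_z; rewrite muE // -(muE _ _ a_neq_b a_nadj_b).
  by apply/card_gt0P; exists x; rewrite inE !(adj_sym _ x) xa xb.
by case: (regular2_mu_gt0_cycle G2 mu_gt0 xa xb a_neq_b a_nadj_b) => [C4 | C5];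
  [apply: Or31 | apply: Or32].
Qed.

Theorem mainTheorem10 (G : sgraph) :
  strongly_regular G ->
  ~ isomorphic G (cycle_graph 0) ->
  ~ isomorphic G (cycle_graph 1) ->
  ~ isomorphic G (cycle_graph 2) ->
  ~ disjoint_union_of_C3 G ->
  exists m, m <= 2 /\ ~ strongly_regular (iter_line m G).
Proof.
(* C_3 is a union of one triangle. *)
move=> [k [l [m G_srg]]] _ not_C4 not_C5 not_triangles.
have [/card_gt0P [x _] Gk _ _] := G_srg.
have [k_le1 | k_gt1] := leqP k 1.
  exists 2; split => //; apply/line_graph_of_edgeless_not_srg/line_graph_edgeless.
  by move=> y; rewrite Gk.
have [k_eq2 | k_neq2] := eqVneq k 2.
  rewrite k_eq2 in G_srg.
  by case: (srg_regular2_classification G_srg) => [/not_C4 | /not_C5 | /not_triangles].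
have [a xa] : exists a, adj x a.
  have /card_gt0P [a] : 0 < #|[set y | adj x y]| by rewrite Gk; lia.
  by rewrite inE; exists a.
exists 2; split => //; apply: (regular_line_not_srg (line_graph_regular Gk)).
- by apply: (@line_graph_triangle _ x); rewrite Gk; lia.
- by apply: (line_graph_induced_path3 xa); rewrite Gk; lia.
Qed.
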